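(* Let $\mathcal{C}$ be a strict monoidal category and $\mathcal{C}'$ a monoidal subcategory. Suppose there is an associative operation $\circledast\colon\mathrm{Hom}_\mathcal{C}(A,V)\otimes\mathrm{Hom}_\mathcal{C}(B,W)\to\mathrm{Hom}_\mathcal{C}(A\otimes B,V\otimes W)$ for all $A,B\in\mathrm{Ob}\,\mathcal{C}$, $V,W\in\mathrm{Ob}\,\mathcal{C}'$, which is natural in its $\mathcal{C}$-arguments, i.e. $(\phi\circ\alpha)\circledast(\psi\circ\beta)=(\phi\circledast\psi)\circ(\alpha\otimes\beta)$ for $\phi\in\mathrm{Hom}_\mathcal{C}(A,V)$, $\psi\in\mathrm{Hom}_\mathcal{C}(B,W)$, $\alpha,\beta$ morphisms of $\mathcal{C}$, and unital, i.e. $\phi\circledast\chi=\phi\otimes\chi$ and $\chi\circledast\phi=\chi\otimes\phi$ for every morphism $\phi$ and every $\chi\in\mathrm{Hom}_\mathcal{C}(B,1_\mathcal{C})$. Then the family $F_{V,W}:=\mathrm{id}_V\circledast\mathrm{id}_W\in\mathrm{End}_\mathcal{C}(V\otimes W)$, $V,W\in\mathrm{Ob}\,\mathcal{C}'$, is a cocycle in $\mathcal{C}'$. Moreover, this cocycle respects the morphisms of a subcategory $\mathcal{C}''\subset\mathcal{C}'$ if and only if $\circledast$ is natural with respect to $\mathcal{C}''$-arguments: $(\zeta\circ\phi)\circledast(\eta\circ\psi)=(\zeta\otimes\eta)\circ(\phi\circledast\psi)$ for $\phi\in\mathrm{Hom}_\mathcal{C}(A,V)$, $\psi\in\mathrm{Hom}_\mathcal{C}(B,W)$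 and $\zeta,\eta$ morphisms of $\mathcal{C}''$.
   Context: A cocycle (in the sense used here) is a family $F_{V,W}$ of morphisms of $V\otimes W$ satisfying $F_{U\otimes V,W}\circ(F_{U,V}\otimes\mathrm{id}_W)=F_{U,V\otimes W}\circ(\mathrm{id}_U\otimes F_{V,W})$ and $F_{V,1}=\mathrm{id}_V=F_{1,V}$, $1=1_\mathcal{C}$ the unit object. It respects morphisms of $\mathcal{C}''$ if $F_{V',W'}\circ(\zeta\otimes\eta)=(\zeta\otimes\eta)\circ F_{V,W}$ for all morphisms $\zeta\colon V\to V'$, $\eta\colon W\to W'$ of $\mathcal{C}''$. *)

(* A strict monoidal category is presented
   "arrows-only": one type of morphisms with source/target maps, a total
   composition which is only constrained on composable pairs. *)
Set Implicit Arguments.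

Record StrictMonCat := {
  Ob : Type;
  Mor : Type;
  src : Mor -> Ob;
  tgt : Mor -> Ob;
  idm : Ob -> Mor;
  comp : Mor -> Mor -> Mor;          (* comp f g = f o g, when tgt g = src f *)
  tens : Ob -> Ob -> Ob;
  tensM : Mor -> Mor -> Mor;
  unit : Ob;
  src_id : forall A, src (idm A) = A;
  tgt_id : forall A, tgt (idm A) = A;
  src_comp : forall f g, tgt g = src f -> src (comp f g) = src g;
  tgt_comp : forall f g, tgt g = src f -> tgt (comp f g) = tgt f;
  comp_idl : forall f, comp (idm (tgt f)) f = f;
  comp_idr : forall f, comp f (idm (src f)) = f;
  comp_assoc : forall f g h, tgt h = src g -> tgt g = src f ->
      comp f (comp g h) = comp (comp f g) h;
  src_tens : forall f g, src (tensM f g) = tens (src f) (src g);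
  tgt_tens : forall f g, tgt (tensM f g) = tens (tgt f) (tgt g);
  tens_id : forall A B, tensM (idm A) (idm B) = idm (tens A B);
  interchange : forall f g f' g', tgt f' = src f -> tgt g' = src g ->
      comp (tensM f g) (tensM f' g') = tensM (comp f f') (comp g g');
  tens_assoc : forall A B C, tens (tens A B) C = tens A (tens B C);
  tensM_assoc : forall f g h, tensM (tensM f g) h = tensM f (tensM g h);
  tens_unitl : forall A, tens unit A = A;
  tens_unitr : forall A, tens A unit = A;
  tensM_unitl : forall f, tensM (idm unit) f = f;
  tensM_unitr : forall f, tensM f (idm unit) = f
}.

Arguments src {_}. Arguments tgt {_}. Arguments idm {_}. Arguments comp {_}.
Arguments tens {_}. Arguments tensM {_}. Arguments unit {_}.

Definition is_hom {C : StrictMonCat} (f : Mor C) (A V : Ob C) : Prop :=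
  src f = A /\ tgt f = V.

Record SubCat (C : StrictMonCat) := {
  sob : Ob C -> Prop;
  smor : Mor C -> Prop;
  smor_src : forall f, smor f -> sob (src f);
  smor_tgt : forall f, smor f -> sob (tgt f);
  smor_id : forall A, sob A -> smor (idm A);
  smor_comp : forall f g, smor f -> smor g -> tgt g = src f -> smor (comp f g)
}.
Arguments sob {_}. Arguments smor {_}.

Definition is_monoidal_sub (C : StrictMonCat) (S : SubCat C) : Prop :=
  sob S unit /\
  (forall A B, sob S A -> sob S B -> sob S (tens A B)) /\
  (forall f g, smor S f -> smor S g -> smor S (tensM f g)).

Definition subcat_incl (C : StrictMonCat) (S2 S1 : SubCat C) : Prop :=
  (forall A, sob S2 A -> sob S1 A) /\ (forall f, smor S2 f -> smor S1 f).

Definition is_cocycle (C : StrictMonCat) (S : SubCat C) (F : Ob C -> Ob C -> Mor C) : Prop :=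
  (forall V W, sob S V -> sob S W -> is_hom (F V W) (tens V W) (tens V W)) /\
  (forall U V W, sob S U -> sob S V -> sob S W ->
     comp (F (tens U V) W) (tensM (F U V) (idm W)) =
     comp (F U (tens V W)) (tensM (idm U) (F V W))) /\
  (forall V, sob S V -> F V unit = idm V) /\
  (forall V, sob S V -> F unit V = idm V).

Definition respects_morphisms (C : StrictMonCat) (S'' : SubCat C) (F : Ob C -> Ob C -> Mor C) : Prop :=
  forall zeta eta, smor S'' zeta -> smor S'' eta ->
    comp (F (tgt zeta) (tgt eta)) (tensM zeta eta) =
    comp (tensM zeta eta) (F (src zeta) (src eta)).

Definition op_natural_in (C : StrictMonCat) (S S'' : SubCat C) (op : Mor C -> Mor C -> Mor C) : Prop :=
  forall phi psi zeta eta,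
    sob S (tgt phi) -> sob S (tgt psi) ->
    smor S'' zeta -> smor S'' eta ->
    src zeta = tgt phi -> src eta = tgt psi ->
    op (comp zeta phi) (comp eta psi) = comp (tensM zeta eta) (op phi psi).

(* Naturality in the C-arguments factors every product through the identities:
   [op phi psi = F V W o (phi (x) psi)] for [phi : A -> V], [psi : B -> W].
   Applied to [op (F U V) id_W] and [op id_U (F V W)], associativity of [op] becomes
   the cocycle identity, and unitality gives [F V 1 = id_V = F 1 V].  Rewriting both
   sides of the C''-naturality law through the same factorization shows that it is
   equivalent to [F] commuting with [zeta (x) eta]. *)

Lemma comp_idl_tgt (C : StrictMonCat) (f : Mor C) (V : Ob C) :
  tgt f = V -> comp (idm V) f = f.
Proof. intros <-; apply comp_idl. Qed.

Section CocycleOfProduct.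
Variable C : StrictMonCat.
Variable S : SubCat C.
Variable op : Mor C -> Mor C -> Mor C.

Hypothesis op_hom : forall phi psi, sob S (tgt phi) -> sob S (tgt psi) ->
  is_hom (op phi psi) (tens (src phi) (src psi)) (tens (tgt phi) (tgt psi)).
Hypothesis op_assoc : forall phi psi chi,
  sob S (tgt phi) -> sob S (tgt psi) -> sob S (tgt chi) ->
  op (op phi psi) chi = op phi (op psi chi).
Hypothesis op_comp : forall phi psi alpha beta,
  sob S (tgt phi) -> sob S (tgt psi) ->
  tgt alpha = src phi -> tgt beta = src psi ->
  op (comp phi alpha) (comp psi beta) = comp (op phi psi) (tensM alpha beta).
Hypothesis op_unitl : forall phi chi, sob S (tgt phi) -> tgt chi = unit ->
  op phi chi = tensM phi chi.
Hypothesis op_unitr : forall phi chi, sob S (tgt phi) -> tgt chi = unit ->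
  op chi phi = tensM chi phi.

Definition op_cocycle (V W : Ob C) : Mor C := op (idm V) (idm W).

Lemma op_cocycle_hom {V W} : sob S V -> sob S W ->
  is_hom (op_cocycle V W) (tens V W) (tens V W).
Proof.
  intros HV HW; unfold op_cocycle.
  pose proof (op_hom (idm V) (idm W)) as H.
  rewrite !src_id, !tgt_id in H; auto.
Qed.

Lemma op_factor phi psi V W : tgt phi = V -> tgt psi = W -> sob S V -> sob S W ->
  op phi psi = comp (op_cocycle V W) (tensM phi psi).
Proof.
  intros Hphi Hpsi HV HW; unfold op_cocycle.
  rewrite <- op_comp by (rewrite ?tgt_id, ?src_id; auto).
  rewrite !comp_idl_tgt by assumption; reflexivity.
Qed.

Lemma op_cocycle_is_cocycle :
  (forall A B, sob S A -> sob S B -> sob S (tens A B)) -> is_cocycle S op_cocycle.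
Proof.
  intros Htens; split; [|split; [|split]].
  - exact @op_cocycle_hom.
  - intros U V W HU HV HW.
    destruct (op_cocycle_hom HU HV) as [_ HUV].
    destruct (op_cocycle_hom HV HW) as [_ HVW].
    rewrite <- (op_factor (op_cocycle U V) (idm W)) by (rewrite ?tgt_id; auto).
    rewrite <- (op_factor (idm U) (op_cocycle V W)) by (rewrite ?tgt_id; auto).
    unfold op_cocycle; apply op_assoc; rewrite ?tgt_id; auto.
  - intros V HV; unfold op_cocycle.
    rewrite op_unitl by (rewrite ?tgt_id; auto).
    rewrite tens_id, tens_unitr; reflexivity.
  - intros V HV; unfold op_cocycle.
    rewrite op_unitr by (rewrite ?tgt_id; auto).
    apply tensM_unitl.
Qed.

Section Naturality.
Variable S'' : SubCat C.
Hypothesis sob_incl : forall A, sob S'' A -> sob S A.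

Lemma op_natural_respects :
  op_natural_in S S'' op -> respects_morphisms S'' op_cocycle.
Proof.
  intros Hnat zeta eta Hzeta Heta.
  pose proof (sob_incl _ (smor_src _ _ Hzeta)) as Hsz.
  pose proof (sob_incl _ (smor_src _ _ Heta)) as Hse.
  rewrite <- op_factor by (auto using sob_incl, smor_tgt).
  transitivity (op (comp zeta (idm (src zeta))) (comp eta (idm (src eta)))).
  - rewrite !comp_idr; reflexivity.
  - apply Hnat; rewrite ?tgt_id; auto.
Qed.

Lemma respects_op_natural :
  respects_morphisms S'' op_cocycle -> op_natural_in S S'' op.
Proof.
  intros Hresp phi psi zeta eta Hphi Hpsi Hzeta Heta Hz He.
  pose proof (sob_incl _ (smor_tgt _ _ Hzeta)) as Htz.
  pose proof (sob_incl _ (smor_tgt _ _ Heta)) as Hte.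
  destruct (op_cocycle_hom Hphi Hpsi) as [HFs HFt].
  destruct (op_cocycle_hom Htz Hte) as [HGs _].
  rewrite (op_factor (comp zeta phi) (comp eta psi) (tgt zeta) (tgt eta))
    by (rewrite ?tgt_comp; auto).
  rewrite (op_factor phi psi (tgt phi) (tgt psi)) by auto.
  rewrite <- interchange by congruence.
  rewrite comp_assoc by (rewrite ?tgt_tens, ?src_tens; congruence).
  rewrite Hresp by assumption.
  rewrite Hz, He.
  rewrite <- comp_assoc by (rewrite ?tgt_tens, ?src_tens; congruence).
  reflexivity.
Qed.

End Naturality.
End CocycleOfProduct.

Theorem lemma6p1 (C : StrictMonCat) (C' C'' : SubCat C)
  (op : Mor C -> Mor C -> Mor C)
  (HC' : is_monoidal_sub C')
  (HC'' : subcat_incl C'' C')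
  (* typing: phi \in Hom(A,V), psi \in Hom(B,W), V,W in C'
     ==> op phi psi \in Hom(A (x) B, V (x) W) *)
  (Htyp : forall phi psi, sob C' (tgt phi) -> sob C' (tgt psi) ->
     is_hom (op phi psi) (tens (src phi) (src psi)) (tens (tgt phi) (tgt psi)))
  (* associativity *)
  (Hassoc : forall phi psi chi,
     sob C' (tgt phi) -> sob C' (tgt psi) -> sob C' (tgt chi) ->
     op (op phi psi) chi = op phi (op psi chi))
  (* naturality in the C-arguments *)
  (Hnat : forall phi psi alpha beta,
     sob C' (tgt phi) -> sob C' (tgt psi) ->
     tgt alpha = src phi -> tgt beta = src psi ->
     op (comp phi alpha) (comp psi beta) = comp (op phi psi) (tensM alpha beta))
  (* unitality *)
  (Hunitl : forall phi chi, sob C' (tgt phi) -> tgt chi = unit ->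
     op phi chi = tensM phi chi)
  (Hunitr : forall phi chi, sob C' (tgt phi) -> tgt chi = unit ->
     op chi phi = tensM chi phi) :
  let F := fun V W => op (idm V) (idm W) in
  is_cocycle C' F /\
  (respects_morphisms C'' F <-> op_natural_in C' C'' op).
Proof.
  intros F.
  destruct HC' as [_ [Htens _]].
  destruct HC'' as [Hsob _].
  split; [|split].
  - apply op_cocycle_is_cocycle; assumption.
  - apply respects_op_natural; assumption.
  - apply op_natural_respects; assumption.
Qed.
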